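(* For every $n\ge1$ and $0\le m<n$, $S_{n,m}(0010,0021)=S_{n,m}(0011,0021)$.
   Context: An ascent in a sequence is an index $j$ with $x_j<x_{j+1}$; $\mathrm{asc}$ counts ascents. An ascent sequence of length $n$ is a sequence $x_1\cdots x_n$ of non-negative integers with $x_1=0$ and $x_i\le \mathrm{asc}(x_1\cdots x_{i-1})+1$ for $1<i\le n$. A sequence contains a pattern $\tau$ (a sequence of non-negative integers) if some subsequence is order-isomorphic to $\tau$ (same relative order, equal letters to equal letters); otherwise it avoids $\tau$. $S_{n,m}(T)$ is the number of ascent sequences of length $n$ with exactly $m$ ascents avoiding all patterns in $T$. *)

From mathcomp Require Import all_boot.
Set Implicit Arguments. Unset Strict Implicit. Unset Printing Implicit Defensive.

Fixpoint asc (x : seq nat) : nat :=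
  match x with
  | a :: ((b :: _) as t) => (a < b) + asc t
  | _ => 0
  end.

Definition is_ascent_seq (x : seq nat) : bool :=
  (head 0 x == 0) &&
  all (fun i => nth 0 x i <= (asc (take i x)).+1) (iota 1 (size x).-1).

Definition order_iso (s t : seq nat) : bool :=
  (size s == size t) &&
  all (fun i => all (fun j =>
     ((nth 0 s i < nth 0 s j) == (nth 0 t i < nth 0 t j)) &&
     ((nth 0 s i == nth 0 s j) == (nth 0 t i == nth 0 t j)))
     (iota 0 (size s))) (iota 0 (size s)).

Fixpoint subseqs (x : seq nat) : seq (seq nat) :=
  match x with
  | [::] => [:: [::]]
  | a :: t => let r := subseqs t in [seq a :: s | s <- r] ++ r
  end.

Definition contains (x tau : seq nat) : bool :=
  has (fun s => order_iso s tau) (subseqs x).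

Definition avoids (x tau : seq nat) : bool := ~~ contains x tau.

Fixpoint all_seqs (n b : nat) : seq (seq nat) :=
  match n with
  | 0 => [:: [::]]
  | n'.+1 => [seq a :: s | a <- iota 0 b, s <- all_seqs n' b]
  end.

(* Every ascent sequence of length n
   has entries <= n-1 < n, so it occurs exactly once in all_seqs n n. *)
Definition S (n m : nat) (T : seq (seq nat)) : nat :=
  count (fun x => [&& size x == n, is_ascent_seq x, asc x == m
                    & all (avoids x) T]) (all_seqs n n).

From mathcomp Require Import all_boot zify.
Set Implicit Arguments. Unset Strict Implicit. Unset Printing Implicit Defensive.

(* Both pattern pairs forbid occurrences a a d c with a < d; they differ in where c may
   sit: 0010 and 0021 rule out a <= c < d, while 0011 and 0021 rule out a < c <= d.  Call
   u blocked after a prefix q when q has a repeated value b <= u followed later by some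
   d > u.  Avoiding the first pair means that no entry is blocked after its prefix;
   avoiding the second means that no entry sits just above a blocked value.  Sliding
   every entry down to the bottom of the run of blocked values beneath it, or back up to
   its top, is therefore a bijection between the two classes.  Moving an entry inside a
   blocked run changes neither which values are blocked later nor how consecutive
   entries compare, so length, ascents and the ascent-sequence condition are
   preserved. *)

Section PrefixScan.
Variable T : Type.

Fixpoint has_with_prefix (P : seq T -> T -> bool) (acc s : seq T) : bool :=
  if s is c :: s' then P acc c || has_with_prefix P (rcons acc c) s' else false.

Fixpoint map_with_prefix (h : seq T -> T -> T) (acc s : seq T) : seq T :=
  if s is c :: s' then h acc c :: map_with_prefix h (rcons acc c) s' else [::].

Lemma has_with_prefix_rcons P p c :
  has_with_prefix P [::] (rcons p c) = has_with_prefix P [::] p || P p c.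
Proof.
suff gen acc : has_with_prefix P acc (rcons p c) = has_with_prefix P acc p || P (acc ++ p) c.
  by rewrite gen.
elim: p acc => [|a p IH] acc /=; first by rewrite cats0 orbF.
by rewrite IH cat_rcons orbA.
Qed.

Lemma map_with_prefix_rcons h p c :
  map_with_prefix h [::] (rcons p c) = rcons (map_with_prefix h [::] p) (h p c).
Proof.
suff gen acc : map_with_prefix h acc (rcons p c) =
               rcons (map_with_prefix h acc p) (h (acc ++ p) c) by rewrite gen.
elim: p acc => [|a p IH] acc /=; first by rewrite cats0.
by rewrite IH cat_rcons.
Qed.

Lemma size_map_with_prefix h acc s : size (map_with_prefix h acc s) = size s.
Proof. by elim: s acc => [|c s IH] acc //=; rewrite IH. Qed.

Lemma has_with_prefixP (P : seq T -> T -> bool) s :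
  reflect (exists x1 c x2, s = x1 ++ c :: x2 /\ P x1 c) (has_with_prefix P [::] s).
Proof.
elim/last_ind: s => [|s c IH].
  by apply: ReflectF => -[[|? ?] [? [? []]]].
rewrite has_with_prefix_rcons; apply: (iffP orP) => [[]|].
- by case/IH=> x1 [d [x2 [-> H]]]; exists x1, d, (rcons x2 c); rewrite rcons_cat.
- by move=> H; exists s, c, [::]; rewrite cats1.
- case=> x1 [d [x2 []]]; case/lastP: x2 => [|x2 e].
    by rewrite cats1 => /rcons_inj [-> ->]; right.
  rewrite -rcons_cons -rcons_cat => /rcons_inj [Es _] H.
  by left; apply/IH; exists x1, d, x2.
Qed.

End PrefixScan.

Definition repeated (p : seq nat) b := 1 < count_mem b p.
Definition repeated_le (p : seq nat) u := has (repeated p) (iota 0 u.+1).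
(* [blocked p u]: appending [u] to [p] would complete an occurrence [a a d u] with
   [a <= u < d]. *)
Definition blocked (p : seq nat) u :=
  has_with_prefix (fun q d => repeated_le q u && (u < d)) [::] p.

Lemma repeated_leP p u : reflect (exists2 b, b <= u & repeated p b) (repeated_le p u).
Proof.
apply: (iffP hasP) => -[b].
  by rewrite mem_iota add0n ltnS => ? ?; exists b.
by move=> ? ?; exists b; rewrite // mem_iota add0n ltnS.
Qed.

Lemma repeated_rcons p c b : repeated (rcons p c) b = repeated p b || (b == c) && (b \in p).
Proof.
rewrite /repeated -cats1 count_cat /= addn0 -has_pred1 has_count eq_sym.
by case: eqP => [->|_]; rewrite /= ?addn0 ?orbF //; case: (count _ _) => [|[]].
Qed.

Lemma repeated_le_rcons p c u :
  repeated_le (rcons p c) u = repeated_le p u || (c \in p) && (c <= u).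
Proof.
apply/repeated_leP/orP => [[b le_bu]|].
  rewrite repeated_rcons => /orP [rep_b|/andP [/eqP <- b_p]].
    by left; apply/repeated_leP; exists b.
  by right; rewrite b_p.
case=> [/repeated_leP [b le_bu rep_b]|/andP [c_p le_cu]].
  by exists b; rewrite // repeated_rcons rep_b.
by exists c; rewrite // repeated_rcons eqxx c_p orbT.
Qed.

Lemma repeated_le_mono p u v : repeated_le p u -> u <= v -> repeated_le p v.
Proof.
case/repeated_leP=> b le_bu rep_b le_uv.
by apply/repeated_leP; exists b; rewrite // (leq_trans le_bu).
Qed.

Lemma blocked_rcons p c u : blocked (rcons p c) u = blocked p u || repeated_le p u && (u < c).
Proof. exact: has_with_prefix_rcons. Qed.

Lemma blocked_repeated_le p u : blocked p u -> repeated_le p u.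
Proof.
case/has_with_prefixP=> x1 [d [x2 [-> /andP [rep _]]]].
case/repeated_leP: rep => b le_bu rep_b; apply/repeated_leP; exists b => //.
by apply: leq_trans rep_b (leq_count_subseq _ (prefix_subseq _ _)).
Qed.

Lemma blocked_lt_max p u : blocked p u -> u < \max_(a <- p) a.
Proof.
case/has_with_prefixP=> x1 [d [x2 [-> /andP [_ lt_ud]]]].
apply: leq_trans lt_ud (@leq_bigmax_seq _ _ xpredT (fun a => a) _ _ _) => //.
by rewrite mem_cat inE eqxx orbT.
Qed.

Section Slides.
Variable P : pred nat.

Fixpoint slide_down c := if c is c'.+1 then (if P c' then slide_down c' else c) else 0.

Fixpoint slide_up k w := if k is k'.+1 then (if P w then slide_up k' w.+1 else w) else w.

Lemma slide_down_le c : slide_down c <= c.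
Proof. by elim: c => //= c IH; case: (P c) => //; apply: leqW. Qed.

Lemma slide_down_run c u : slide_down c <= u < c -> P u.
Proof.
elim: c => [|c IH] /=; first by lia.
case Pc: (P c) => /andP [le_du lt_uc]; last by lia.
by have [-> //|ne_uc] := eqVneq u c; apply: IH; lia.
Qed.

Lemma slide_down_stop c : (slide_down c == 0) || ~~ P (slide_down c).-1.
Proof. by elim: c => //= c IH; case Pc: (P c); rewrite //= Pc. Qed.

Lemma slide_down_unique c c' : c' <= c -> (forall u, c' <= u < c -> P u) ->
  (c' == 0) || ~~ P c'.-1 -> slide_down c = c'.
Proof.
elim: c => [|c IH] le_c'c run stop; first by case: c' le_c'c {run stop}.
rewrite /=; have [Ec|le_c'c'] : c' = c.+1 \/ c' <= c by lia.
  by move: stop; rewrite Ec /= => /negbTE ->.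
by rewrite run ?IH // => [u lt_u|]; [apply: run | ]; lia.
Qed.

Lemma slide_up_spec k w : (forall u, P u -> u < w + k) ->
  [/\ w <= slide_up k w, ~~ P (slide_up k w) & forall u, w <= u < slide_up k w -> P u].
Proof.
elim: k w => [|k IH] w /= bound.
  split=> // [|u ?]; last by lia.
  by apply/negP => /bound; rewrite addn0 ltnn.
case Pw: (P w); last by split=> // [|u ?]; [rewrite Pw | lia].
have [le_w1 stop run] : [/\ w.+1 <= slide_up k w.+1, ~~ P (slide_up k w.+1)
    & forall u, w.+1 <= u < slide_up k w.+1 -> P u].
  by apply: IH => u /bound; rewrite addnS addSn.
split=> // [|u lt_u]; first exact: ltnW.
by have [<- //|ne_wu] := eqVneq w u; apply: run; lia.
Qed.

Lemma slide_up_unique k w c : (forall u, P u -> u < w + k) -> w <= c -> ~~ P c ->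
  (forall u, w <= u < c -> P u) -> slide_up k w = c.
Proof.
elim: k w => [|k IH] w /= bound le_wc stop run.
  have [//|lt_wc] : w = c \/ w < c by lia.
  have Pw : P w by apply: run; lia.
  by move/bound: Pw; rewrite addn0 ltnn.
have [Ewc|ne_wc] := eqVneq w c; first by subst c; rewrite (negbTE stop).
rewrite run; last by lia.
apply: IH => [u /bound||//|u ?]; [by rewrite addSnnS | lia | apply: run; lia].
Qed.

End Slides.

Lemma slide_down_ltn (G H : pred nat) d c : subpred G H -> ~~ H d ->
  (slide_down G d < slide_down H c) = (d < c).
Proof.
move=> GH notHd.
have le_d := slide_down_le G d; have le_c := slide_down_le H c.
have stopH := slide_down_stop H c.
apply/idP/idP => lt; rewrite ltnNge; apply/negP => le.
  have Gc : G (slide_down H c).-1 by apply: (slide_down_run (c := d)); lia.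
  by move: stopH; rewrite (GH _ Gc) orbF => /eqP; lia.
by case/negP: notHd; apply: (slide_down_run (c := c)); lia.
Qed.

Definition bad_0010_0021 (x : seq nat) := has_with_prefix blocked [::] x.
Definition bad_0011_0021 (x : seq nat) :=
  has_with_prefix (fun q c => (0 < c) && blocked q c.-1) [::] x.

Lemma bad_0010_0021_rcons p c : bad_0010_0021 (rcons p c) = bad_0010_0021 p || blocked p c.
Proof. exact: has_with_prefix_rcons. Qed.

Lemma bad_0011_0021_rcons p c :
  bad_0011_0021 (rcons p c) = bad_0011_0021 p || (0 < c) && blocked p c.-1.
Proof. exact: has_with_prefix_rcons. Qed.

Definition lower (x : seq nat) : seq nat :=
  map_with_prefix (fun q c => slide_down (blocked q) c) [::] x.

(* Blocked values lie below the maximum of the prefix, so that maximum is enough fuel. *)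
Definition raise (x : seq nat) : seq nat :=
  map_with_prefix (fun q w => slide_up (blocked q) (\max_(a <- q) a) w) [::] x.

Lemma lower_rcons p c : lower (rcons p c) = rcons (lower p) (slide_down (blocked p) c).
Proof. exact: map_with_prefix_rcons. Qed.

Lemma raise_rcons p w :
  raise (rcons p w) = rcons (raise p) (slide_up (blocked p) (\max_(a <- p) a) w).
Proof. exact: map_with_prefix_rcons. Qed.

Lemma size_lower p : size (lower p) = size p.
Proof. exact: size_map_with_prefix. Qed.

Lemma size_raise p : size (raise p) = size p.
Proof. exact: size_map_with_prefix. Qed.

Lemma blocked_bound p w u : blocked p u -> u < w + \max_(a <- p) a.
Proof. by move/blocked_lt_max/leq_trans; apply; rewrite leq_addl. Qed.

Lemma slide_up_blocked_spec p w :
  let c := slide_up (blocked p) (\max_(a <- p) a) w in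
  [/\ w <= c, ~~ blocked p c & forall u, w <= u < c -> blocked p u].
Proof. exact/slide_up_spec/blocked_bound. Qed.

Definition similar (p q : seq nat) :=
  [/\ blocked q =1 blocked p, repeated_le q =1 repeated_le p
    & forall u, ~~ repeated_le p u -> (u \in q) = (u \in p)].

(* An entry may move inside a run of blocked values without affecting what is blocked
   later. *)
Lemma similar_rcons p q c c' : similar p q ->
  (forall u, minn c c' <= u < maxn c c' -> blocked p u) -> similar (rcons p c) (rcons q c').
Proof.
case=> eq_blocked eq_rep eq_mem run.
have not_le u v : ~~ repeated_le p u -> repeated_le p v -> (v <= u) = false.
  by move=> not_rep_u rep_v; apply: contraNF not_rep_u => /(repeated_le_mono rep_v).
have [<-|ne_cc'] := eqVneq c c'.
  split=> u; rewrite ?blocked_rcons ?repeated_le_rcons ?eq_blocked ?eq_rep //.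
    case: (boolP (repeated_le p u)) => //= not_rep_u.
    by case: (boolP (repeated_le p c)) => [/(not_le u) ->|/eq_mem ->]; rewrite ?andbF.
  by rewrite negb_or !mem_rcons !inE => /andP [/eq_mem ->].
have rep_min : repeated_le p (minn c c').
  by apply/blocked_repeated_le/run; rewrite leqnn /=; lia.
have rep_c : repeated_le p c by apply: repeated_le_mono rep_min (geq_minl _ _).
have rep_c' : repeated_le p c' by apply: repeated_le_mono rep_min (geq_minr _ _).
split=> u; rewrite ?blocked_rcons ?repeated_le_rcons ?eq_blocked ?eq_rep.
- case: (boolP (blocked p u)) => //= not_blocked_u; congr (_ && _).
  by apply/idP/idP => lt; apply: contraNT not_blocked_u => ?; apply: run; lia.
- case: (boolP (repeated_le p u)) => //= not_rep_u.
  by rewrite !(not_le u) ?andbF.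
- rewrite negb_or !mem_rcons !inE => /andP [not_rep_u _]; rewrite eq_mem //.
  by congr (_ || _); apply/eqP/eqP => eq_u; move: not_rep_u; rewrite eq_u ?rep_c ?rep_c'.
Qed.

Lemma similar_lower p : similar p (lower p).
Proof.
elim/last_ind: p => [|p c IH]; first by split=> // u; rewrite /lower /=.
rewrite lower_rcons; apply: similar_rcons => // u.
have le_c := slide_down_le (blocked p) c.
rewrite (minn_idPr le_c) (maxn_idPl le_c); exact: slide_down_run.
Qed.

Lemma similar_raise p : similar p (raise p).
Proof.
elim/last_ind: p => [|p w IH]; first by split=> // u; rewrite /raise /=.
rewrite raise_rcons; apply: similar_rcons => // u.
have [le_w _ run] := slide_up_blocked_spec p w.
by rewrite (minn_idPl le_w) (maxn_idPr le_w); exact: run.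
Qed.

Lemma lower_avoids_0011_0021 p : ~~ bad_0011_0021 (lower p).
Proof.
elim/last_ind: p => [|p c IH] //.
have [eq_blocked _ _] := similar_lower p.
rewrite lower_rcons bad_0011_0021_rcons negb_or IH eq_blocked /=.
by case/orP: (slide_down_stop (blocked p) c) => [/eqP ->|/negbTE ->]; rewrite ?andbF.
Qed.

Lemma raise_avoids_0010_0021 p : ~~ bad_0010_0021 (raise p).
Proof.
elim/last_ind: p => [|p w IH] //.
have [eq_blocked _ _] := similar_raise p; have [_ stop _] := slide_up_blocked_spec p w.
by rewrite raise_rcons bad_0010_0021_rcons negb_or IH eq_blocked.
Qed.

Lemma raise_lower p : ~~ bad_0010_0021 p -> raise (lower p) = p.
Proof.
elim/last_ind: p => [|p c IH] //.
rewrite bad_0010_0021_rcons negb_or => /andP [good_p not_blocked_c].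
have [eq_blocked _ _] := similar_lower p.
rewrite lower_rcons raise_rcons IH //; congr rcons.
apply: slide_up_unique; first exact: blocked_bound.
- exact: slide_down_le.
- by rewrite eq_blocked.
- by move=> u /slide_down_run; rewrite eq_blocked.
Qed.

Lemma lower_raise p : ~~ bad_0011_0021 p -> lower (raise p) = p.
Proof.
elim/last_ind: p => [|p w IH] //.
rewrite bad_0011_0021_rcons negb_or => /andP [good_p stop].
have [eq_blocked _ _] := similar_raise p; have [le_w _ run] := slide_up_blocked_spec p w.
rewrite raise_rcons lower_rcons IH //; congr rcons.
apply: slide_down_unique => // [u /run|]; rewrite eq_blocked //.
by case: w stop {le_w run} => //= w; rewrite orbC.
Qed.

Lemma asc_rcons_rcons s d c : asc (rcons (rcons s d) c) = asc (rcons s d) + (d < c).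
Proof.
elim: s => [|a [|b s] IH] /=; rewrite ?addn0 //.
by move: IH => /= ->; rewrite addnA.
Qed.

Lemma lower_asc p : ~~ bad_0010_0021 p -> asc (lower p) = asc p.
Proof.
elim/last_ind: p => [|p c IH] //; case/lastP: p IH => [|p d] IH good //.
move: (good); rewrite !bad_0010_0021_rcons !negb_or => /andP [/andP [good_p not_blocked_d] _].
rewrite !lower_rcons !asc_rcons_rcons -lower_rcons IH ?bad_0010_0021_rcons ?negb_or ?good_p //.
rewrite slide_down_ltn // => [u|]; first by rewrite blocked_rcons => ->.
by rewrite blocked_rcons negb_or not_blocked_d ltnn andbF.
Qed.

Lemma raise_asc p : ~~ bad_0011_0021 p -> asc (raise p) = asc p.
Proof. by move=> good; rewrite -lower_asc ?raise_avoids_0010_0021 // lower_raise. Qed.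

(* The largest entry allowed after [p] in an ascent sequence; the first entry must be 0. *)
Definition next_bound (p : seq nat) := if p is [::] then 0 else (asc p).+1.

Lemma next_bound_rcons p c : next_bound (rcons p c) = (asc (rcons p c)).+1.
Proof. by case: p. Qed.

Lemma asc_le_size s : asc s <= (size s).-1.
Proof.
elim: s => [|a [|b s] IH] //=.
by move: IH => /= IH; have := leq_b1 (a < b); lia.
Qed.

Lemma next_bound_le_size p : next_bound p <= size p.
Proof. by case: p => [|a p] //; apply: (asc_le_size (a :: p)). Qed.

Lemma next_bound_mono p c : next_bound p <= next_bound (rcons p c).
Proof. by case/lastP: p => [|p d] //; rewrite !next_bound_rcons asc_rcons_rcons leq_addr. Qed.

Lemma is_ascent_seq_rcons p c :
  is_ascent_seq (rcons p c) = is_ascent_seq p && (c <= next_bound p).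
Proof.
case: p => [|a p]; first by rewrite /is_ascent_seq /= leqn0 andbT.
set q := a :: p; have -> : next_bound q = (asc q).+1 by [].
rewrite /is_ascent_seq size_rcons succnK -andbA; congr andb.
have size_q : size q = (size p).+1 by [].
rewrite size_q -[(size p).+1]addn1 iotaD all_cat all_seq1 add1n -size_q -cats1.
rewrite nth_cat ltnn subnn take_size_cat //; congr andb.
rewrite addn1 succnK; apply: eq_in_all => i; rewrite mem_iota add1n -size_q => /andP [_ lt_i].
by rewrite nth_cat lt_i takel_cat // ltnW.
Qed.

Lemma ascent_seq_max_le p : is_ascent_seq p -> \max_(a <- p) a <= next_bound p.
Proof.
elim/last_ind: p => [|p c IH]; first by rewrite big_nil.
rewrite is_ascent_seq_rcons -cats1 big_cat big_seq1 cats1 geq_max => /andP [/IH le_max le_c].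
by rewrite !(leq_trans _ (next_bound_mono p c)).
Qed.

Lemma ascent_seq_lt_size p : is_ascent_seq p -> all (fun a => a < size p) p.
Proof.
elim/last_ind: p => [|p c IH] //.
rewrite is_ascent_seq_rcons all_rcons size_rcons => /andP [/IH lt_size le_c].
rewrite ltnS (leq_trans le_c (next_bound_le_size p)) /=.
by apply: sub_all lt_size => a /ltnW.
Qed.

Lemma next_bound_lower p : ~~ bad_0010_0021 p -> next_bound (lower p) = next_bound p.
Proof. by case/lastP: p => [|p c] // good; rewrite lower_rcons !next_bound_rcons -lower_rcons lower_asc. Qed.

Lemma lower_ascent_seq p : ~~ bad_0010_0021 p -> is_ascent_seq p -> is_ascent_seq (lower p).
Proof.
elim/last_ind: p => [|p c IH] //.
rewrite bad_0010_0021_rcons negb_or is_ascent_seq_rcons => /andP [good _] /andP [asc_p le_c].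
by rewrite lower_rcons is_ascent_seq_rcons IH // next_bound_lower // (leq_trans (slide_down_le _ c)).
Qed.

Lemma next_bound_raise p : ~~ bad_0011_0021 p -> next_bound (raise p) = next_bound p.
Proof. by case/lastP: p => [|p c] // good; rewrite raise_rcons !next_bound_rcons -raise_rcons raise_asc. Qed.

Lemma raise_ascent_seq p : ~~ bad_0011_0021 p -> is_ascent_seq p -> is_ascent_seq (raise p).
Proof.
elim/last_ind: p => [|p w IH] //.
rewrite bad_0011_0021_rcons negb_or is_ascent_seq_rcons => /andP [good _] /andP [asc_p le_w].
rewrite raise_rcons is_ascent_seq_rcons IH // next_bound_raise //=.
have [le_wc _ run] := slide_up_blocked_spec p w.
set c := slide_up _ _ w in le_wc run *.
have [<-|ne_wc] := eqVneq w c; first by [].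
have /blocked_lt_max : blocked p c.-1 by apply: run; lia.
by have := ascent_seq_max_le asc_p; lia.
Qed.

Lemma mem_subseqs s x : (s \in subseqs x) = subseq s x.
Proof.
elim: x s => [|a x IH] s; first by case: s.
rewrite /= mem_cat IH.
case: s => [|b s]; first by rewrite sub0seq orbT.
case: eqP => [->|ne].
  rewrite (mem_map (fun u v (E : a :: u = a :: v) => congr1 behead E)) IH.
  by apply/orP/idP => [[//|/cons_subseq]|->]; [|left].
apply/orP/idP => [[/mapP [s' _ [E _]]|//]|->]; [by case: ne|by right].
Qed.

Lemma containsP x tau : reflect (exists2 s, subseq s x & order_iso s tau) (contains x tau).
Proof.
apply: (iffP hasP) => [[s]|[s]]; first by rewrite mem_subseqs => ? ?; exists s.
by rewrite -mem_subseqs; exists s.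
Qed.

Lemma subseq_consP (d : nat) t y :
  reflect (exists y1 y2, y = y1 ++ d :: y2 /\ subseq t y2) (subseq (d :: t) y).
Proof.
elim: y => [|b y IH] /=; first by apply: ReflectF => -[[|? ?] [? []]].
case: eqP => [->|ne].
  apply: (iffP idP) => [sub|[y1 [y2 [E sub]]]]; first by exists [::], y.
  case: y1 E => [|c y1] [] *; subst => //.
  by rewrite -cat_rcons; apply: subseq_trans sub (suffix_subseq _ _).
apply: (iffP IH) => [[y1 [y2 [-> sub]]]|[[|c y1] [y2 [/= [E1 E2] sub]]]].
- by exists (b :: y1), y2.
- by case: ne; rewrite E1.
- by exists y1, y2; rewrite E2.
Qed.

Lemma subseq_rconsP s (d : nat) x :
  reflect (exists x1 x2, x = x1 ++ d :: x2 /\ subseq s x1) (subseq (rcons s d) x).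
Proof.
rewrite -subseq_rev rev_rcons.
apply: (iffP (subseq_consP _ _ _)) => [[y1 [y2 [E sub]]]|[x1 [x2 [E sub]]]].
  exists (rev y2), (rev y1); rewrite -subseq_rev revK; split=> //.
  by rewrite -[x]revK E rev_cat rev_cons cat_rcons.
exists (rev x2), (rev x1); rewrite subseq_rev; split=> //.
by rewrite E rev_cat rev_cons cat_rcons.
Qed.

Lemma subseq_pair (b : nat) y : subseq [:: b; b] y = repeated y b.
Proof.
rewrite /repeated; elim: y => [|a y IH] //=.
case: eqP => [->|ne]; rewrite /= ?eqxx ?sub1seq.
  by rewrite add1n ltnS -has_pred1 has_count.
by rewrite IH; case: eqP => // E; case: ne.
Qed.

Lemma subseq_aadcP a d c x : reflect (exists x1 x2 y1 y2,
   [/\ x = x1 ++ c :: x2, x1 = y1 ++ d :: y2 & repeated y1 a]) (subseq [:: a; a; d; c] x).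
Proof.
apply: (iffP (subseq_rconsP [:: a; a; d] c x)).
  case=> x1 [x2 [E /(subseq_rconsP [:: a; a] d x1) [y1 [y2 [E' sub]]]]].
  by exists x1, x2, y1, y2; rewrite -subseq_pair.
case=> x1 [x2 [y1 [y2 [E E' rep]]]]; exists x1, x2; split=> //.
by apply/(subseq_rconsP [:: a; a] d x1); exists y1, y2; rewrite subseq_pair.
Qed.

Lemma bad_0010_0021P x : reflect (exists a d c, [/\ subseq [:: a; a; d; c] x, a <= c & c < d])
  (bad_0010_0021 x).
Proof.
apply: (iffP (has_with_prefixP _ _)).
  case=> x1 [c [x2 [E /has_with_prefixP [y1 [d [y2 [E' /andP [/repeated_leP [a le_ac rep] lt_cd]]]]]]]].
  by exists a, d, c; split=> //; apply/subseq_aadcP; exists x1, x2, y1, y2.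
case=> a [d [c [/subseq_aadcP [x1 [x2 [y1 [y2 [E E' rep]]]]] le_ac lt_cd]]].
exists x1, c, x2; split=> //; apply/has_with_prefixP; exists y1, d, y2; split=> //.
by rewrite lt_cd andbT; apply/repeated_leP; exists a.
Qed.

Lemma bad_0011_0021P x : reflect (exists a d c, [/\ subseq [:: a; a; d; c] x, a < c & c <= d])
  (bad_0011_0021 x).
Proof.
apply: (iffP (has_with_prefixP _ _)).
  case=> x1 [c [x2 [E /andP [gt0_c]]]].
  case/has_with_prefixP=> [y1 [d [y2 [E' /andP [/repeated_leP [a le_ac rep] lt_cd]]]]].
  exists a, d, c; split; [|lia|lia].
  by apply/subseq_aadcP; exists x1, x2, y1, y2.
case=> a [d [c [/subseq_aadcP [x1 [x2 [y1 [y2 [E E' rep]]]]] lt_ac le_cd]]].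
exists x1, c, x2; split=> //; rewrite (leq_ltn_trans _ lt_ac) //=.
apply/has_with_prefixP; exists y1, d, y2; split=> //.
by apply/andP; split; [apply/repeated_leP; exists a => //; lia | lia].
Qed.

Lemma order_iso_0010 a b d c :
  order_iso [:: a; b; d; c] [:: 0; 0; 1; 0] = [&& b == a, c == a & a < d].
Proof. by rewrite /order_iso /=; apply/idP/idP; lia. Qed.

Lemma order_iso_0011 a b d c :
  order_iso [:: a; b; d; c] [:: 0; 0; 1; 1] = [&& b == a, a < d & c == d].
Proof. by rewrite /order_iso /=; apply/idP/idP; lia. Qed.

Lemma order_iso_0021 a b d c :
  order_iso [:: a; b; d; c] [:: 0; 0; 2; 1] = [&& b == a, a < c & c < d].
Proof. by rewrite /order_iso /=; apply/idP/idP; lia. Qed.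

Lemma contains_size4 x tau : size tau = 4 -> contains x tau ->
  exists a b d c, subseq [:: a; b; d; c] x /\ order_iso [:: a; b; d; c] tau.
Proof.
move=> size_tau /containsP [[|a [|b [|d [|c [|e s]]]]] sub iso];
  try by move: iso; rewrite /order_iso size_tau.
by exists a, b, d, c.
Qed.

Lemma avoids_0010_0021 x :
  all (avoids x) [:: [:: 0; 0; 1; 0]; [:: 0; 0; 2; 1]] = ~~ bad_0010_0021 x.
Proof.
rewrite /= andbT /avoids -negb_or; congr negb; apply/idP/idP.
  case/orP=> /contains_size4 [] // a [b [d [c [sub]]]];
    rewrite ?order_iso_0010 ?order_iso_0021 => /and3P [/eqP Eb ? ?]; subst b;
    apply/bad_0010_0021P; exists a, d, c; split=> //; lia.
case/bad_0010_0021P=> a [d [c [sub le_ac lt_cd]]].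
have [lt_ac|Ec] : a < c \/ c = a by lia.
  by apply/orP; right; apply/containsP; exists [:: a; a; d; c]; rewrite ?order_iso_0021 ?eqxx ?lt_ac.
by subst c; apply/orP; left; apply/containsP; exists [:: a; a; d; a]; rewrite ?order_iso_0010 ?eqxx.
Qed.

Lemma avoids_0011_0021 x :
  all (avoids x) [:: [:: 0; 0; 1; 1]; [:: 0; 0; 2; 1]] = ~~ bad_0011_0021 x.
Proof.
rewrite /= andbT /avoids -negb_or; congr negb; apply/idP/idP.
  case/orP=> /contains_size4 [] // a [b [d [c [sub]]]];
    rewrite ?order_iso_0011 ?order_iso_0021 => /and3P [/eqP Eb ? ?]; subst b;
    apply/bad_0011_0021P; exists a, d, c; split=> //; lia.
case/bad_0011_0021P=> a [d [c [sub lt_ac le_cd]]].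
have [lt_cd|Ed] : c < d \/ d = c by lia.
  by apply/orP; right; apply/containsP; exists [:: a; a; d; c]; rewrite ?order_iso_0021 ?eqxx ?lt_ac ?lt_cd.
by subst d; apply/orP; left; apply/containsP; exists [:: a; a; c; c]; rewrite ?order_iso_0011 ?eqxx ?lt_ac.
Qed.

Lemma mem_all_seqs n b x : (x \in all_seqs n b) = (size x == n) && all (fun a => a < b) x.
Proof.
elim: n x => [|n IH] x; first by case: x.
apply/allpairsP/idP => [[[a s] [/= Ha Hs ->]]|].
  by move: Ha Hs; rewrite mem_iota IH /= eqSS => -> /andP [-> ->].
case: x => [|a s] // /andP [Hs /andP [Ha Hall]].
exists (a, s); split=> //; first by rewrite mem_iota Ha.
by rewrite IH; apply/andP; split.
Qed.

Lemma uniq_all_seqs n b : uniq (all_seqs n b).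
Proof.
elim: n => [|n IH] //=; apply: allpairs_uniq => //; first exact: iota_uniq.
by move=> [a s] [a' s'] _ _ /= [-> ->].
Qed.

Lemma ascent_seq_mem_all_seqs x : is_ascent_seq x -> x \in all_seqs (size x) (size x).
Proof. by move=> asc_x; rewrite mem_all_seqs eqxx ascent_seq_lt_size. Qed.

Lemma count_leq_inj (T : eqType) (s : seq T) (P Q : pred T) (f g : T -> T) :
  uniq s -> (forall x, x \in s -> P x -> (f x \in s) && Q (f x)) ->
  (forall x, P x -> g (f x) = x) -> count P s <= count Q s.
Proof.
move=> uniq_s PQ fK; rewrite -!size_filter -(size_map f); apply: uniq_leq_size.
  rewrite map_inj_in_uniq ?filter_uniq // => x y.
  by rewrite !mem_filter => /andP [Px _] /andP [Py _] Exy; rewrite -(fK x) // Exy fK.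
move=> y /mapP [x]; rewrite mem_filter => /andP [Px sx] ->.
by rewrite mem_filter andbC; apply: PQ.
Qed.

Definition ascent_class n m (bad : pred (seq nat)) x :=
  [&& size x == n, is_ascent_seq x, asc x == m & ~~ bad x].

Lemma lower_ascent_class n m x : ascent_class n m bad_0010_0021 x ->
  (lower x \in all_seqs n n) && ascent_class n m bad_0011_0021 (lower x).
Proof.
case/and4P=> /eqP <- asc_x /eqP <- good.
have asc_lx := lower_ascent_seq good asc_x.
rewrite -{1 2}(size_lower x) ascent_seq_mem_all_seqs //.
by rewrite /ascent_class size_lower lower_asc // asc_lx lower_avoids_0011_0021 !eqxx.
Qed.

Lemma raise_ascent_class n m x : ascent_class n m bad_0011_0021 x ->
  (raise x \in all_seqs n n) && ascent_class n m bad_0010_0021 (raise x).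
Proof.
case/and4P=> /eqP <- asc_x /eqP <- good.
have asc_rx := raise_ascent_seq good asc_x.
rewrite -{1 2}(size_raise x) ascent_seq_mem_all_seqs //.
by rewrite /ascent_class size_raise raise_asc // asc_rx raise_avoids_0010_0021 !eqxx.
Qed.

Theorem proposition3 (n m : nat) :
  1 <= n -> m < n ->
  S n m [:: [:: 0; 0; 1; 0]; [:: 0; 0; 2; 1]] =
  S n m [:: [:: 0; 0; 1; 1]; [:: 0; 0; 2; 1]].
Proof.
move=> _ _; rewrite /S.
under eq_count do rewrite avoids_0010_0021.
under [in RHS]eq_count do rewrite avoids_0011_0021.
apply/eqP; rewrite eqn_leq.
apply/andP; split; apply: count_leq_inj (uniq_all_seqs n n) _ _.
- by move=> x _; apply: lower_ascent_class.
- by move=> x /and4P [_ _ _]; apply: raise_lower.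
- by move=> x _; apply: raise_ascent_class.
- by move=> x /and4P [_ _ _]; apply: lower_raise.
Qed.
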